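(* Let $\tau$ be a $T_1$-topology on the bicyclic monoid $\mathcal{C}(p,q)$ such that $(\mathcal{C}(p,q),\tau)$ is a topological inverse semigroup (the semigroup operation is jointly continuous and the inversion is continuous). If there exists a point $q^ip^j\in\mathcal{C}(p,q)$ such that the subspace $\updownarrow_{\preceq} q^ip^j$ of $(\mathcal{C}(p,q),\tau)$ is quasi-regular at $q^ip^j$, then $\tau$ is discrete.
   Context: The bicyclic monoid $\mathcal{C}(p,q)$ is the monoid with identity $1$ generated by two elements $p,q$ subject only to $pq=1$. Every element has a unique form $q^ip^j$ with $i,j\in\omega$, and multiplication is $q^kp^l\cdot q^mp^n = q^{k-l+m}p^n$ if $l<m$, $=q^kp^n$ if $l=m$, $=q^kp^{l-m+n}$ if $l>m$. It is an inverse semigroup with $(q^ip^j)^{-1}=q^jp^i$. The natural partial order $\preceq$ on it is: $s\preceq t$ iff $s=te$ for some idempotent $e$; equivalently $q^ip^j\preceq q^sp^t$ iff $i\ge s$ and $i-j=s-t$. For $x\in\mathcal{C}(p,q)$, $\uparrow_{\preceq}x=\{y: x\preceq y\}$, $\downarrow_{\preceq}x=\{y: y\preceq x\}$, and $\updownarrow_{\preceq}x=\uparrow_{\preceq}x\cup\downarrow_{\preceq}x$ (so $\updownarrow_{\preceq}q^ip^j=\{q^sp^t: s-t=i-j\}$). A subspace $Y$ of a topological space is quasi-regular at a point $x\in Y$ if for every open neighbourhood $U$ of $x$ in $Y$ there is a nonempty open subset $V$ of $Y$ with $\mathrm{cl}_Y(V)\subseteq U$. *)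

From Stdlib Require Import Arith Lia.

(* The element q^i p^j of the bicyclic monoid C(p,q) is encoded as the pair (i,j). *)
Definition bicyclic := (nat * nat)%type.

Definition bmul (x y : bicyclic) : bicyclic :=
  let '(k, l) := x in let '(m, n) := y in
  if Nat.ltb l m then (k + (m - l), n)
  else if Nat.eqb l m then (k, n)
  else (k, (l - m) + n).

Definition binv (x : bicyclic) : bicyclic := let '(i, j) := x in (j, i).

(* Updownarrow of q^i p^j w.r.t. the natural partial order:
   { q^s p^t : s - t = i - j } (difference in the integers). *)
Definition updown (x : bicyclic) : bicyclic -> Prop :=
  fun y => fst y + snd x = snd y + fst x.

Definition is_topology {X : Type} (O : (X -> Prop) -> Prop) : Prop :=
  O (fun _ => True) /\
  (forall U V, O U -> O V -> O (fun x => U x /\ V x)) /\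
  (forall F : (X -> Prop) -> Prop, (forall U, F U -> O U) ->
     O (fun x => exists U, F U /\ U x)).

Definition T1 {X : Type} (O : (X -> Prop) -> Prop) : Prop :=
  forall x y : X, x <> y -> exists U, O U /\ U x /\ ~ U y.

Definition bmul_continuous (O : (bicyclic -> Prop) -> Prop) : Prop :=
  forall x y W, O W -> W (bmul x y) ->
    exists U V, O U /\ O V /\ U x /\ V y /\
      (forall a b, U a -> V b -> W (bmul a b)).

Definition binv_continuous (O : (bicyclic -> Prop) -> Prop) : Prop :=
  forall W, O W -> O (fun x => W (binv x)).

Definition topological_inverse_semigroup (O : (bicyclic -> Prop) -> Prop) : Prop :=
  is_topology O /\ bmul_continuous O /\ binv_continuous O.

Definition subspace_open {X : Type} (O : (X -> Prop) -> Prop) (Y A : X -> Prop) : Prop :=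
  (forall x, A x -> Y x) /\
  exists U, O U /\ (forall x, A x <-> (Y x /\ U x)).

Definition subspace_closure {X : Type} (O : (X -> Prop) -> Prop) (Y V : X -> Prop) : X -> Prop :=
  fun y => Y y /\ forall W, subspace_open O Y W -> W y -> exists z, W z /\ V z.

Definition quasi_regular_at {X : Type} (O : (X -> Prop) -> Prop) (Y : X -> Prop) (x : X) : Prop :=
  Y x /\
  forall U, subspace_open O Y U -> U x ->
    exists V, subspace_open O Y V /\ (exists z, V z) /\
      (forall y, subspace_closure O Y V y -> U y).

Definition discrete {X : Type} (O : (X -> Prop) -> Prop) : Prop :=
  forall A : X -> Prop, O A.

From Stdlib Require Import Arith Lia Classical FunctionalExtensionality PropExtensionality.

(* Let x = q^i p^j and Y = updown x, a chain indexed by the exponent of q.  Right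
   multiplication by the idempotent q^t p^t is continuous, fixes the points of Y whose
   exponent of p is at least t and moves x to the point of Y with that exponent.  If x
   were not isolated in Y, every neighbourhood of x would (by T1) contain points of Y of
   arbitrarily large index, so any two open sets meeting the part of Y above x would meet
   in Y; a point of that part other than x then lies in the closure of every nonempty open
   subset of Y near x, contradicting quasi-regularity.  Hence x is isolated in Y, so by
   the retraction z |-> (z z^-1) x (z^-1 z) onto Y it is isolated in C(p,q), and the
   translations z |-> q^i p^a z q^b p^j make every point q^a p^b isolated. *)

Ltac bmul_cases :=
  repeat (cbv beta iota zeta delta [bmul] in *;
  match goal with
  | |- context [Nat.ltb ?a ?b] => destruct (Nat.ltb_spec a b)
  | |- context [Nat.eqb ?a ?b] => destruct (Nat.eqb_spec a b)
  | H : context [Nat.ltb ?a ?b] |- _ => destruct (Nat.ltb_spec a b)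
  | H : context [Nat.eqb ?a ?b] |- _ => destruct (Nat.eqb_spec a b)
  end).

Section Topology.

Context {X : Type} (O : (X -> Prop) -> Prop).

Definition continuous (f : X -> X) : Prop := forall W, O W -> O (fun x => W (f x)).

Definition isolated_in (Y : X -> Prop) (x : X) : Prop :=
  exists G, O G /\ G x /\ forall y, Y y -> G y -> y = x.

Hypothesis O_topology : is_topology O.

Lemma open_setT : O (fun _ => True).
Proof. apply O_topology. Qed.

Lemma open_setI U V : O U -> O V -> O (fun x => U x /\ V x).
Proof. apply O_topology. Qed.

Lemma open_of_locally_open (A : X -> Prop) :
  (forall x, A x -> exists U, O U /\ U x /\ forall y, U y -> A y) -> O A.
Proof.
  intros locA. destruct O_topology as [_ [_ open_union]].
  replace A with (fun x => exists U, (O U /\ forall y, U y -> A y) /\ U x).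
  - apply open_union. intros U [oU _]. exact oU.
  - apply functional_extensionality; intro x; apply propositional_extensionality; split.
    + intros [U [[_ UA] Ux]]. auto.
    + intros Ax. destruct (locA x Ax) as [U [oU [Ux UA]]]. exists U. auto.
Qed.

Lemma continuous_id : continuous (fun x => x).
Proof. intros W oW. exact oW. Qed.

Lemma continuous_const c : continuous (fun _ => c).
Proof.
  intros W _. apply open_of_locally_open. intros x Wc.
  exists (fun _ => True). split; [apply open_setT | auto].
Qed.

Lemma discrete_of_isolated : (forall x, isolated_in (fun _ => True) x) -> discrete O.
Proof.
  intros isolated A. apply open_of_locally_open. intros x Ax.
  destruct (isolated x) as [G [oG [Gx Gsub]]].
  exists G. split; [exact oG | split; [exact Gx |]].
  intros y Gy. rewrite (Gsub y I Gy). exact Ax.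
Qed.

Hypothesis O_T1 : T1 O.

Lemma open_neq x : O (fun y => y <> x).
Proof.
  apply open_of_locally_open. intros y neq_yx.
  destruct (O_T1 y x neq_yx) as [U [oU [Uy not_Ux]]].
  exists U. split; [exact oU | split; [exact Uy |]].
  intros z Uz ->. contradiction.
Qed.

Lemma open_avoiding_finite (g : nat -> X) c N :
  exists G, O G /\ G c /\ forall n, n < N -> G (g n) -> g n = c.
Proof.
  induction N as [|N [G [oG [Gc avoid]]]].
  - exists (fun _ => True). split; [apply open_setT | split; [auto | intros; lia]].
  - exists (fun x => G x /\ (x = c \/ x <> g N)). split; [| split; auto].
    + apply open_setI; [exact oG |]. apply open_of_locally_open. intros x Hx.
      destruct (classic (x = g N)) as [eq_x | neq_x].
      * destruct Hx as [eq_xc | neq_x]; [| contradiction].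
        exists (fun _ => True). split; [apply open_setT | split; [auto |]].
        intros y _. destruct (classic (y = g N)); [left; congruence | right; auto].
      * exists (fun y => y <> g N). split; [apply open_neq | auto].
    + intros n lt_nN [Ggn Hn]. destruct (Nat.eq_dec n N) as [-> | neq_nN].
      * destruct Hn; [auto | contradiction].
      * apply avoid; [lia | exact Ggn].
Qed.

End Topology.

Lemma bmul_idem_above s t c : c <= t -> bmul (s, t) (c, c) = (s, t).
Proof. intros. bmul_cases; f_equal; lia. Qed.

Lemma bmul_idem_below s t c : t <= c -> bmul (s, t) (c, c) = (s + c - t, c).
Proof. intros. bmul_cases; f_equal; lia. Qed.

Lemma bmul_binv_r s t : bmul (s, t) (binv (s, t)) = (s, s).
Proof. simpl. bmul_cases; f_equal; lia. Qed.

Lemma bmul_binv_l s t : bmul (binv (s, t)) (s, t) = (t, t).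
Proof. simpl. bmul_cases; f_equal; lia. Qed.

Lemma updown_pair i j z : updown (i, j) z -> z = (fst z, fst z + j - i).
Proof. destruct z as [s t]. unfold updown. simpl. intros. f_equal. lia. Qed.

Lemma updown_idem_sandwich i j c d : updown (i, j) (bmul (bmul (c, c) (i, j)) (d, d)).
Proof. unfold updown. bmul_cases; simpl; lia. Qed.

Lemma idem_sandwich_self i j : bmul (bmul (i, i) (i, j)) (j, j) = (i, j).
Proof. bmul_cases; f_equal; lia. Qed.

Lemma idem_sandwich_eq i j s t : i <= s -> j <= t ->
  bmul (bmul (s, s) (i, j)) (t, t) = (i, j) -> (s, t) = (i, j).
Proof. intros ? ? E. bmul_cases; inversion E; f_equal; lia. Qed.

Lemma translate_self i j a b : bmul (bmul (i, a) (a, b)) (b, j) = (i, j).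
Proof. bmul_cases; f_equal; lia. Qed.

Lemma translate_eq i j a b s t : a <= s -> b <= t ->
  bmul (bmul (i, a) (s, t)) (b, j) = (i, j) -> (s, t) = (a, b).
Proof. intros ? ? E. bmul_cases; inversion E; f_equal; lia. Qed.

Section TopologicalBicyclic.

Variable O : (bicyclic -> Prop) -> Prop.
Hypotheses (O_topology : is_topology O) (O_bmul : bmul_continuous O)
  (O_binv : binv_continuous O) (O_T1 : T1 O).

Lemma continuous_bmul f g :
  continuous O f -> continuous O g -> continuous O (fun z => bmul (f z) (g z)).
Proof.
  intros cf cg W oW. apply (open_of_locally_open O O_topology). intros z Wfg.
  destruct (O_bmul (f z) (g z) W oW Wfg) as [U [V [oU [oV [Uf [Vg UV]]]]]].
  exists (fun w => U (f w) /\ V (g w)). split; [| split; [auto |]].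
  - apply open_setI; [exact O_topology | apply cf, oU | apply cg, oV].
  - intros w [Ufw Vgw]. apply UV; assumption.
Qed.

Lemma continuous_binv f : continuous O f -> continuous O (fun z => binv (f z)).
Proof. intros cf W oW. apply (cf (fun z => W (binv z))), O_binv, oW. Qed.

Local Ltac continuity :=
  repeat first [ apply (continuous_id O) | apply (continuous_const O O_topology)
               | apply continuous_bmul | apply continuous_binv ].

Lemma open_preimage f W : continuous O f -> O W -> O (fun z => W (f z)).
Proof. intros cf oW. apply cf, oW. Qed.

Lemma open_above a b :
  exists H, O H /\ H (a, b) /\ forall z, H z -> a <= fst z /\ b <= snd z.
Proof.
  destruct (open_avoiding_finite O O_topology O_T1 (fun n => (n, n)) (a, a) a)
    as [Ga [oGa [Gaa avoid_a]]].
  destruct (open_avoiding_finite O O_topology O_T1 (fun n => (n, n)) (b, b) b)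
    as [Gb [oGb [Gbb avoid_b]]].
  exists (fun z => Ga (bmul z (binv z)) /\ Gb (bmul (binv z) z)). split; [| split].
  - apply open_setI; [exact O_topology | apply open_preimage | apply open_preimage];
      auto; continuity.
  - rewrite bmul_binv_r, bmul_binv_l. auto.
  - intros [s t]. rewrite bmul_binv_r, bmul_binv_l. intros [Gss Gtt]. simpl. split.
    + destruct (le_lt_dec a s) as [| lt_sa]; [assumption |].
      specialize (avoid_a s lt_sa Gss). injection avoid_a. lia.
    + destruct (le_lt_dec b t) as [| lt_tb]; [assumption |].
      specialize (avoid_b t lt_tb Gtt). injection avoid_b. lia.
Qed.

Section Chain.

Variables i j : nat.
Local Notation Y := (updown (i, j)).

Lemma open_transport_to_x y W : Y y -> i <= fst y -> O W -> W y ->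
  exists G, O G /\ G (i, j) /\ forall z, Y z -> fst y <= fst z -> G z -> W z.
Proof.
  destruct y as [s t]. unfold updown. simpl. intros Yy le_is oW Wy.
  exists (fun z => W (bmul z (t, t))). split; [| split].
  - apply open_preimage; [continuity | exact oW].
  - rewrite bmul_idem_below by lia. replace (i + t - j) with s by lia. exact Wy.
  - intros [s' t'] Yz le_ss' Wz. simpl in Yz, le_ss'.
    rewrite bmul_idem_above in Wz by lia. exact Wz.
Qed.

Hypothesis x_not_isolated : ~ isolated_in O Y (i, j).

Lemma high_points_near_x G N : O G -> G (i, j) -> exists z, Y z /\ G z /\ N <= fst z.
Proof.
  intros oG Gx.
  destruct (open_avoiding_finite O O_topology O_T1 (fun s => (s, s + j - i)) (i, j) N)
    as [G' [oG' [G'x avoid]]].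
  apply NNPP. intros no_high. apply x_not_isolated.
  exists (fun z => G z /\ G' z). split; [apply open_setI; auto | split; [auto |]].
  intros y Yy [Gy G'y]. destruct (le_lt_dec N (fst y)) as [le_Ny | lt_yN].
  - exfalso. apply no_high. exists y. auto.
  - rewrite (updown_pair i j y Yy) in G'y |- *. apply avoid; assumption.
Qed.

Lemma upper_opens_meet a b A B : Y a -> Y b -> i <= fst a -> i <= fst b ->
  O A -> O B -> A a -> B b -> exists z, Y z /\ A z /\ B z.
Proof.
  intros Ya Yb le_ia le_ib oA oB Aa Bb.
  destruct (open_transport_to_x a A Ya le_ia oA Aa) as [GA [oGA [GAx GA_A]]].
  destruct (open_transport_to_x b B Yb le_ib oB Bb) as [GB [oGB [GBx GB_B]]].
  destruct (high_points_near_x (fun z => GA z /\ GB z) (max (fst a) (fst b))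
              (open_setI O O_topology GA GB oGA oGB) (conj GAx GBx))
    as [z [Yz [[GAz GBz] high]]].
  exists z. split; [exact Yz | split; [apply GA_A | apply GB_B]]; auto; lia.
Qed.

End Chain.

Lemma isolated_in_updown_of_quasi_regular i j :
  quasi_regular_at O (updown (i, j)) (i, j) -> isolated_in O (updown (i, j)) (i, j).
Proof.
  intros [_ qr]. apply NNPP. intros x_not_isolated.
  destruct (open_above i j) as [H [oH [Hx H_above]]].
  set (w := (S i, S j)).
  assert (Yw : updown (i, j) w) by (unfold updown; simpl; lia).
  set (U := fun z => updown (i, j) z /\ H z /\ z <> w).
  assert (U_open : subspace_open O (updown (i, j)) U).
  { split; [unfold U; tauto |]. exists (fun z => H z /\ z <> w).
    split; [apply open_setI, open_neq; auto | unfold U; tauto]. }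
  assert (Ux : U (i, j)).
  { split; [unfold updown; simpl; lia |]. split; [exact Hx |].
    unfold w. intro E. injection E. lia. }
  destruct (qr U U_open Ux) as [V [[_ [Vo [oVo V_eq]]] [[v Vv] clV_U]]].
  assert (Uv : U v).
  { apply clV_U. split; [apply V_eq, Vv |]. intros W _ Wv. exists v. auto. }
  destruct Uv as [Yv [Hv _]].
  assert (w_in_clV : subspace_closure O (updown (i, j)) V w).
  { split; [exact Yw |]. intros W [_ [Wo [oWo W_eq]]] Ww.
    apply W_eq in Ww. apply V_eq in Vv.
    destruct (upper_opens_meet i j x_not_isolated w v Wo Vo Yw Yv
                ltac:(simpl; lia) (proj1 (H_above v Hv)) oWo oVo (proj2 Ww) (proj2 Vv))
      as [z [Yz [Woz Voz]]].
    exists z. split; [apply W_eq | apply V_eq]; auto. }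
  destruct (clV_U w w_in_clV) as [_ [_ neq_ww]]. apply neq_ww. reflexivity.
Qed.

Lemma isolated_of_isolated_in_updown i j :
  isolated_in O (updown (i, j)) (i, j) -> isolated_in O (fun _ => True) (i, j).
Proof.
  intros [G [oG [Gx G_Y]]]. destruct (open_above i j) as [H [oH [Hx H_above]]].
  exists (fun z => G (bmul (bmul (bmul z (binv z)) (i, j)) (bmul (binv z) z)) /\ H z).
  split; [| split].
  - apply open_setI; [exact O_topology | apply open_preimage | exact oH];
      [continuity | exact oG].
  - rewrite bmul_binv_r, bmul_binv_l, idem_sandwich_self. auto.
  - intros [s t] _ [Gz Hz]. rewrite bmul_binv_r, bmul_binv_l in Gz.
    destruct (H_above _ Hz) as [le_is le_jt].
    apply (idem_sandwich_eq i j s t le_is le_jt), G_Y; [apply updown_idem_sandwich | exact Gz].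
Qed.

Lemma isolated_translate i j a b :
  isolated_in O (fun _ => True) (i, j) -> isolated_in O (fun _ => True) (a, b).
Proof.
  intros [K [oK [Kx K_x]]]. destruct (open_above a b) as [H [oH [Hy H_above]]].
  exists (fun z => K (bmul (bmul (i, a) z) (b, j)) /\ H z). split; [| split].
  - apply open_setI; [exact O_topology | apply open_preimage | exact oH];
      [continuity | exact oK].
  - rewrite translate_self. auto.
  - intros [s t] _ [Kz Hz]. destruct (H_above _ Hz) as [le_as le_bt].
    apply (translate_eq i j a b s t le_as le_bt), K_x; [exact I | exact Kz].
Qed.

End TopologicalBicyclic.

Theorem theorem2 (O : (bicyclic -> Prop) -> Prop) :
  topological_inverse_semigroup O -> T1 O ->
  (exists x : bicyclic, quasi_regular_at O (updown x) x) ->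
  discrete O.
Proof.
  intros [O_topology [O_bmul O_binv]] O_T1 [[i j] qr].
  apply (discrete_of_isolated O O_topology). intros [a b].
  apply (isolated_translate O O_topology O_bmul O_binv O_T1 i j).
  apply (isolated_of_isolated_in_updown O O_topology O_bmul O_binv O_T1).
  apply (isolated_in_updown_of_quasi_regular O O_topology O_bmul O_binv O_T1), qr.
Qed.
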